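(* Let $H$ be a $3$-graph, let $K_H=3v(H)^3$, let $C>0$ and $\delta\in\mathbb{R}$, and let $G$ be a $3$-partite $3$-graph with vertex classes $X,Y,Z$, each of size $n$. If $e(G)\ge C n^{3-\delta}$, then there exists a vertex $z\in Z$ such that (1) $e(\mathcal{L}_z)\ge (C/2)\,n^{2-\delta}$, and (2) the number of $H$-forbidden $4$-cycles contained in $\mathcal{L}_z$ is at most $(2K_H/C)\,n^{1+\delta}\,e(\mathcal{L}_z)$.
   Context: A $3$-graph is a $3$-uniform hypergraph; $v(\cdot)$ and $e(\cdot)$ denote numbers of vertices and edges. $G$ is $3$-partite with classes $X,Y,Z$: every edge of $G$ contains exactly one vertex of each class. For $z\in Z$, the link graph $\mathcal{L}_z$ is the bipartite graph between $X$ and $Y$ whose edges are the pairs $xy$ ($x\in X$, $y\in Y$) such that $\{x,y,z\}$ is an edge of $G$. A $4$-cycle between $X$ and $Y$ means a $4$-cycle in the complete bipartite graph on $X\cup Y$ (two vertices in $X$, two in $Y$). For such a $4$-cycle $\mathcal{C}$, a $4$-disk with boundary $\mathcal{C}$ and centre $z\in Z$ is the set of four edges $\{x,y,z\}$ of $G$, $xy\in\mathcal{C}$, which exists exactly when $\mathcal{C}\subseteq\mathcal{L}_z$; so the number of $4$-disks with boundary $\mathcal{C}$ equals the number of $z\in Z$ with $\mathcal{C}\subseteq \mathcal{L}_z$. With $K_H=3v(H)^3$, a $4$-cycle between $X$ and $Y$ is $H$-admissible if it is the boundary of more than $K_H$ distinct $4$-disks in $G$, and $H$-forbidden if it is the boundary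 of at most $K_H$ (possibly $0$) distinct $4$-disks in $G$. *)

From mathcomp Require Import all_boot all_order all_algebra.
From mathcomp Require Import all_classical all_reals all_analysis.
Set Implicit Arguments. Unset Strict Implicit. Unset Printing Implicit Defensive.

(* A 3-partite 3-graph G with classes X = Y = Z = 'I_n (three disjoint copies)
   is a set of triples ((x, y), z). *)
Definition tri3graph (n : nat) := {set 'I_n * 'I_n * 'I_n}.

Definition link n (G : tri3graph n) (z : 'I_n) : {set 'I_n * 'I_n} :=
  [set p | ((p.1, p.2), z) \in G].

(* A 4-cycle between X and Y is determined by a 2-subset of X and a
   2-subset of Y: the cycle x1 y1 x2 y2 with edges {x,y}, x in A, y in B. *)
Definition is_4cycle n (c : {set 'I_n} * {set 'I_n}) : bool :=
  (#|c.1| == 2) && (#|c.2| == 2).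

Definition cycle_in n (c : {set 'I_n} * {set 'I_n}) (L : {set 'I_n * 'I_n}) : bool :=
  [forall x in c.1, forall y in c.2, (x, y) \in L].

(* Number of 4-disks with boundary c = number of centres z with c in L_z. *)
Definition num_disks n (G : tri3graph n) (c : {set 'I_n} * {set 'I_n}) : nat :=
  #|[set z : 'I_n | cycle_in c (link G z)]|.

Definition KH (vH : nat) : nat := 3 * vH ^ 3.

Definition forbidden (vH : nat) n (G : tri3graph n) (c : {set 'I_n} * {set 'I_n}) : bool :=
  num_disks G c <= KH vH.

Definition num_forbidden_in_link (vH : nat) n (G : tri3graph n) (z : 'I_n) : nat :=
  #|[set c : {set 'I_n} * {set 'I_n} |
      is_4cycle c && cycle_in c (link G z) && forbidden vH G c]|.

From mathcomp Require Import all_boot all_order all_algebra.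
From mathcomp Require Import all_classical all_reals all_analysis.
From mathcomp Require Import ring lra.

(* Write e(z) = e(L_z) and f(z) for the number of H-forbidden 4-cycles in L_z.
   Two counting facts hold for every G:
   - sum_z e(z) = e(G), since each edge of G lies in exactly one link graph;
   - sum_z f(z) <= K_H n^4, by double counting the pairs (c, z) where c is a
     forbidden 4-cycle in L_z: each forbidden c is counted for at most K_H
     centres z, and there are at most C(n,2)^2 <= n^4 four-cycles.
   An averaging argument over real weights then finds z with
   e(z) >= S/(2n) and f(z) <= (2M/S) e(z) whenever sum e >= S > 0 and
   sum f <= M.  With S = C n^(3-delta) and M = K_H n^4 these two bounds are
   exactly (1) and (2), after simplifying the real powers of n. *)

Import Order.TTheory GRing.Theory Num.Theory.

Lemma card_set_indicator (T : finType) (P : pred T) :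
  #|[set x | P x]| = \sum_x (P x : nat).
Proof.
by rewrite -sum1_card big_mkcond; apply: eq_bigr => x _; rewrite inE; case: (P x).
Qed.

Lemma double_count (T U : finType) (r : T -> U -> bool) :
  \sum_x #|[set y | r x y]| = \sum_y #|[set x | r x y]|.
Proof.
under eq_bigr do rewrite card_set_indicator.
by rewrite exchange_big; apply: eq_bigr => y _; rewrite card_set_indicator.
Qed.

Lemma card_sum_links n (G : tri3graph n) : #|G| = \sum_z #|link G z|.
Proof.
have -> : G = [set t | (t.1, t.2) \in G] by apply/setP => -[p z]; rewrite inE.
rewrite card_set_indicator.
rewrite -(pair_big xpredT xpredT (fun p z => ((p, z) \in G : nat))) /= exchange_big /=.
apply: eq_bigr => z _; rewrite card_set_indicator.
by apply: eq_bigr => -[x y] _; rewrite inE.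
Qed.

(* 'C(n, k) <= n ^ k, since 'C(n, k) * k`! is the falling factorial n ^_ k. *)
Lemma bin_leq_exp n k : 'C(n, k) <= n ^ k.
Proof.
apply: (@leq_trans (n ^_ k)); first by rewrite -bin_ffact leq_pmulr ?fact_gt0.
rewrite ffact_prod (@leq_trans (\prod_(i < k) n)) //.
  by apply: leq_prod => i _; exact: leq_subr.
by rewrite prod_nat_const card_ord.
Qed.

Lemma card_4cycles n : #|[set c : {set 'I_n} * {set 'I_n} | is_4cycle c]| <= n ^ 4.
Proof.
have -> : [set c : {set 'I_n} * {set 'I_n} | is_4cycle c] =
    finset.setX [set A : {set 'I_n} | #|A| == 2] [set A : {set 'I_n} | #|A| == 2].
  by apply/setP => -[A B]; rewrite !inE.
rewrite cardsX card_draws card_ord (_ : 4 = 2 + 2)%N // expnD.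
by apply: leq_mul; exact: bin_leq_exp.
Qed.

(* A forbidden 4-cycle is contained in at most K_H link graphs, so the link
   graphs contain at most K_H n^4 forbidden 4-cycles in total. *)
Lemma sum_forbidden_in_links (vH n : nat) (G : tri3graph n) :
  \sum_z num_forbidden_in_link vH G z <= KH vH * n ^ 4.
Proof.
rewrite /num_forbidden_in_link double_count.
apply: (@leq_trans (\sum_c (is_4cycle c : nat) * KH vH)).
  apply: leq_sum => c _.
  have [cyc|_] := boolP (is_4cycle c); last first.
    by rewrite /= mul0n leqn0 cards_eq0; apply/eqP/setP => z; rewrite !inE.
  have [forb|_] := boolP (forbidden vH G c); last first.
    rewrite (_ : #|_| = 0%N) //; apply/eqP; rewrite cards_eq0.
    by apply/eqP/setP => z; rewrite !inE andbF.
  rewrite /= mul1n; apply: leq_trans forb; apply: eq_leq.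
  by apply: eq_card => z; rewrite !inE andbT.
by rewrite -big_distrl /= -card_set_indicator mulnC leq_mul2l card_4cycles orbT.
Qed.

Local Open Scope ring_scope.

Lemma exists_nonneg_term (R : realDomainType) (I : finType) (i0 : I) (g : I -> R) :
  0 <= \sum_i g i -> exists i, 0 <= g i.
Proof.
move=> sum_ge0; have [/existsP[i gi]|] := boolP [exists i, 0 <= g i]; first by exists i.
move=> /existsPn all_neg; suff: \sum_i g i < 0 by rewrite ltNge sum_ge0.
have g_lt0 i : g i < 0 by rewrite ltNge all_neg.
rewrite (bigD1 i0) //= -[X in _ < X]addr0; apply: ltr_leD; first exact: g_lt0.
by apply: sumr_le0 => i _; exact: ltW.
Qed.

(* For M > 0 this
   follows by averaging the weight 2M e - S f - M S/|I|, whose sum is >= 0. *)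
Lemma exists_dense_sparse (R : realFieldType) (I : finType) (i0 : I)
    (e f : I -> R) (S M : R) :
  0 < S -> (forall i, 0 <= f i) -> S <= \sum_i e i -> \sum_i f i <= M ->
  exists i, S / #|I|%:R / 2 <= e i /\ f i <= 2 * M / S * e i.
Proof.
move=> S_gt0 f_ge0 sum_e sum_f.
set N : R := #|I|%:R; set a := S / N.
have N_gt0 : 0 < N by rewrite ltr0n; apply/card_gt0P; exists i0.
have Na : N * a = S by rewrite /a mulrC divfK ?gt_eqF.
have a_gt0 : 0 < a by rewrite divr_gt0.
have sum_f_ge0 : 0 <= \sum_i f i by apply: sumr_ge0.
have sum_const (x : R) : \sum_(i : I) x = N * x by rewrite sumr_const mulr_natl.
have [M_le0|M_gt0] := leP M 0.
  have sum_f0 : \sum_i f i = 0.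
    by apply/eqP; rewrite eq_le sum_f_ge0 andbT; exact: le_trans sum_f M_le0.
  have f0 i : f i = 0 by apply: (psumr_eq0P _ sum_f0) => // j _; exact: f_ge0.
  have [i ei] : exists i, 0 <= e i - a.
    by apply: exists_nonneg_term => //; rewrite sumrB sum_const Na subr_ge0.
  have M0 : M = 0 by apply/eqP; rewrite eq_le M_le0 (le_trans sum_f_ge0).
  by exists i; rewrite f0 M0 mulr0 !mul0r; split; lra.
have [i wi] : exists i, 0 <= 2 * M * e i - S * f i - M * a.
  apply: exists_nonneg_term => //.
  rewrite !sumrB sum_const -!mulr_sumr (mulrCA N M a) Na.
  have : 0 <= M * (\sum_i e i - S) by rewrite mulr_ge0 ?subr_ge0 // ltW.
  have : 0 <= S * (M - \sum_i f i) by rewrite mulr_ge0 ?subr_ge0 // ltW.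
  lra.
have Sf_ge0 : 0 <= S * f i by rewrite mulr_ge0 // ltW.
exists i; split.
  have : 0 <= M * (2 * e i - a) by lra.
  by rewrite pmulr_rge0 // => ?; lra.
rewrite -(ler_pM2l S_gt0) mulrA mulrCA divff ?gt_eqF // mulr1.
have : 0 <= M * a by apply: mulr_ge0; apply: ltW.
lra.
Qed.

Theorem lemma3p1 (R : realType)
  (VH : finType) (EH : {set {set VH}})
  (hH : forall e, e \in EH -> #|e| = 3%N)
  (C delta : R) (hC : 0 < C)
  (n : nat) (hn : (0 < n)%N) (G : tri3graph n)
  (hG : C * (n%:R `^ (3 - delta)) <= (#|G|)%:R) :
  exists z : 'I_n,
    (C / 2) * (n%:R `^ (2 - delta)) <= (#|link G z|)%:R /\
    (num_forbidden_in_link #|VH| G z)%:R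
      <= (2 * (KH #|VH|)%:R / C) * (n%:R `^ (1 + delta)) * (#|link G z|)%:R.
Proof.
set N : R := n%:R; set K : R := (KH #|VH|)%:R.
have N_gt0 : 0 < N by rewrite ltr0n.
have powN_add x y : N `^ (x + y) = N `^ x * N `^ y.
  by rewrite powRD // lt0r_neq0 // implybT.
have pow3 : N `^ (3 - delta) = N * N `^ (2 - delta).
  by rewrite -{2}(powRr1 (ltW N_gt0)) -powN_add; congr (_ `^ _); lra.
have pow4 : N ^+ 4 = N `^ (3 - delta) * N `^ (1 + delta).
  by rewrite -powN_add -powR_mulrn ?ltW //; congr (_ `^ _); lra.
have S_gt0 : 0 < C * N `^ (3 - delta) by rewrite mulr_gt0 ?powR_gt0.
have sum_links : C * N `^ (3 - delta) <= \sum_z (#|link G z|)%:R.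
  by rewrite -natr_sum -card_sum_links.
have sum_forbidden : \sum_z (num_forbidden_in_link #|VH| G z)%:R <= K * N ^+ 4.
  by rewrite -natr_sum -natrX -natrM ler_nat sum_forbidden_in_links.
have [z [dense sparse]] := @exists_dense_sparse R _ (Ordinal hn) _ _ _ _ S_gt0
  (fun z => ler0n _ _) sum_links sum_forbidden.
have dense_rate : C * N `^ (3 - delta) / #|'I_n|%:R / 2 = C / 2 * N `^ (2 - delta).
  by rewrite card_ord -/N pow3; field; exact: lt0r_neq0.
have sparse_rate : 2 * (K * N ^+ 4) / (C * N `^ (3 - delta)) = 2 * K / C * N `^ (1 + delta).
  by rewrite pow4; field; rewrite lt0r_neq0 // lt0r_neq0 // powR_gt0.
by exists z; rewrite -dense_rate -sparse_rate.
Qed.
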